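(* Let $d\ge2$, $r\ge1$, $l_1,\dots,l_r\in\{1,\dots,d\}$ with $\sum_{j=1}^r l_j\le d$, and $l=d-\sum_{j=1}^r(l_j-1)$. Let $A\in\mathbf S(d;l_1,\dots,l_r)$ have a spectral decomposition $A=PDP^*$ with $P\in\mathbf O(d)$ and $D$ a real diagonal $d\times d$ matrix, and suppose $A$ has exactly $l$ distinct eigenvalues. Then for every $\varepsilon>0$ there is $\delta>0$ such that for every $B\in\mathbf S(d;l_1,\dots,l_r)$ with $\max_{1\le i,j\le d}|A_{i,j}-B_{i,j}|<\delta$, the matrix $B$ has exactly $l$ distinct eigenvalues and admits a spectral decomposition $B=QFQ^*$ with $Q\in\mathbf O(d)$, $F$ real diagonal, such that $\max_{1\le i\le d}|D_{i,i}-F_{i,i}|<\varepsilon$ and $\max_{1\le i,j\le d}|Q_{i,j}-P_{i,j}|<\varepsilon$.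
   Context: $\mathbf O(d)$ is the group of real orthogonal $d\times d$ matrices. For a real symmetric $d\times d$ matrix $x$ let $E_1(x)\le\cdots\le E_d(x)$ be its eigenvalues. $\mathbf S(d;l_1,\dots,l_r)$ is the set of real symmetric $d\times d$ matrices $x$ for which there exist pairwise disjoint $J_1,\dots,J_r\subseteq\{1,\dots,d\}$ with $|J_j|=l_j$ such that, for each $j$, the values $E_i(x)$, $i\in J_j$, are all equal. *)

From HB Require Import structures.
From mathcomp Require Import all_boot all_order all_algebra.
From mathcomp Require Import reals.
Set Implicit Arguments. Unset Strict Implicit. Unset Printing Implicit Defensive.
Import Order.TTheory GRing.Theory Num.Theory.
Local Open Scope ring_scope.

Definition sym_mx (R : realType) (d : nat) (x : 'M[R]_d) : Prop := x^T = x.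

Definition orthogonal_mx (R : realType) (d : nat) (P : 'M[R]_d) : Prop :=
  P *m P^T = 1%:M.

(* s = [:: E_1(x); ...; E_d(x)] : the eigenvalues of x listed with algebraic
   multiplicity in nondecreasing order (i.e. the roots of the characteristic
   polynomial, which splits over R for symmetric x). *)
Definition ordered_eigs (R : realType) (d : nat) (x : 'M[R]_d) (s : seq R) : Prop :=
  sorted <=%R s /\ char_poly x = \prod_(a <- s) ('X - a%:P).

(* x \in S(d; l_1, ..., l_r); index i : 'I_d stands for i+1 in {1..d} *)
Definition in_S (R : realType) (d r : nat) (lv : 'I_r -> nat) (x : 'M[R]_d) : Prop :=
  sym_mx x /\
  exists s : seq R, ordered_eigs x s /\
  exists J : 'I_r -> {set 'I_d},
    (forall j, #|J j| = lv j) /\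
    (forall j k, j != k -> [disjoint J j & J k]) /\
    (forall j (i1 i2 : 'I_d), i1 \in J j -> i2 \in J j -> nth 0 s i1 = nth 0 s i2).

Definition n_distinct_eigs (R : realType) (d : nat) (x : 'M[R]_d) (k : nat) : Prop :=
  exists s : seq R, uniq s /\ size s = k /\ (forall a, eigenvalue x a <-> a \in s).

From HB Require Import structures.
From mathcomp Require Import all_boot all_order all_algebra.
From mathcomp Require Import reals zify.
From mathcomp Require boolp classical_sets topology normedtype realfun matrix_normedtype.
Import Order.TTheory GRing.Theory Num.Theory.
Local Open Scope ring_scope.

Set Implicit Arguments. Unset Strict Implicit. Unset Printing Implicit Defensive.

(* Let a list the l distinct eigenvalues of A, any two at distance at least 2g. As B tends
   to A inside S(d; l_1, ..., l_r), det (x - B) tends to 0 for every x in a, so B has an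
   eigenvalue within g of each x; since membership in S leaves B at most l distinct
   eigenvalues, these are all of them, and the one near x, eig_near B g x, tends to x.
   The Lagrange interpolation polynomial in B that vanishes at the other eigenvalues is then
   the spectral projector of B and tends to that of A. Applied to the columns of P and
   orthonormalised by Gram-Schmidt (which is continuous at orthonormal families and keeps
   eigenvectors of a symmetric matrix), it yields an orthonormal eigenbasis of B close to P. *)

Lemma card_bigcup_disjoint (I T : finType) (s : seq I) (X : I -> {set T}) :
  uniq s -> {in s &, forall i j, i != j -> [disjoint X i & X j]} ->
  #|\bigcup_(i <- s) X i| = (\sum_(i <- s) #|X i|)%N.
Proof.
elim: s => [|i s IH] /=; first by rewrite !big_nil cards0.
case/andP=> i_notin_s uniq_s disX; rewrite !big_cons -IH //; last first.
  by move=> j k js ks; apply: disX; rewrite inE ?js ?ks orbT.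
apply/eqP; rewrite (leq_card_setU _ _).2 bigcup_seq; apply/bigcup_disjoint => j js.
by apply: disX; rewrite ?inE ?eqxx ?js ?orbT //; apply: contraNneq i_notin_s => ->.
Qed.

Lemma size_undup_blocks (T : eqType) (x0 : T) (n r : nat) (s : seq T)
    (J : 'I_r -> {set 'I_n}) :
  size s = n -> (forall j, J j != set0) ->
  (forall j k, j != k -> [disjoint J j & J k]) ->
  (forall j (i1 i2 : 'I_n), i1 \in J j -> i2 \in J j -> nth x0 s i1 = nth x0 s i2) ->
  (size (undup s) <= n - \sum_(j < r) #|J j|.-1)%N.
Proof.
move=> size_s J_neq0 disJ constJ.
pose rp j := xchoose (set0Pn _ (J_neq0 j)).
have rpJ j : rp j \in J j := xchooseP (set0Pn _ (J_neq0 j)).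
(* U keeps all but one index rp j of each block, so every entry of s occurs outside U. *)
pose U := \bigcup_(j <- enum 'I_r) (J j :\ rp j).
have cardU : #|U| = (\sum_(j < r) #|J j|.-1)%N.
  rewrite card_bigcup_disjoint ?enum_uniq //; last first.
    move=> j k _ _ /disJ disjk.
    exact: disjointWl (subsetDl _ _) (disjointWr (subsetDl _ _) disjk).
  by rewrite big_enum; apply: eq_bigr => j _; rewrite (cardsD1 (rp j) (J j)) rpJ.
have rp_notin_U j : rp j \notin U.
  rewrite /U bigcup_seq; apply/bigcupP => -[k _ /setD1P[rp_neq rpk]].
  have [kj|/disJ/disjointFr/(_ rpk)] := eqVneq k j; last by rewrite rpJ.
  by rewrite kj eqxx in rp_neq.
have cardCU : #|~: U| = (n - \sum_(j < r) #|J j|.-1)%N.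
  by have := cardsC U; rewrite card_ord cardU; lia.
rewrite -cardCU cardE -(size_map (fun i : 'I_n => nth x0 s i) (enum (~: U))).
apply: uniq_leq_size (undup_uniq _) _ => x.
rewrite mem_undup => /(nthP x0) [k k_lt <-]; rewrite size_s in k_lt.
have [kU|kU] := boolP (Ordinal k_lt \in U).
  rewrite /U bigcup_seq in kU; case/bigcupP: kU => j _ /setD1P [_ kJ].
  apply/mapP; exists (rp j); first by rewrite mem_enum inE rp_notin_U.
  exact: (constJ j (Ordinal k_lt) (rp j) kJ (rpJ j)).
by apply/mapP; exists (Ordinal k_lt); rewrite ?mem_enum ?inE.
Qed.

Lemma in_S_sym_split (R : realType) d r (lv : 'I_r -> nat) (B : 'M[R]_d) :
  (forall j, 0 < lv j)%N -> in_S lv B ->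
  B^T = B /\ exists s, char_poly B = \prod_(z <- s) ('X - z%:P) /\
                       (size (undup s) <= d - \sum_(j < r) (lv j).-1)%N.
Proof.
move=> lv_gt0 [symB [s [[_ charB] [J [cardJ [disJ constJ]]]]]]; split => //.
exists s; split => //; under eq_bigr do rewrite -cardJ.
apply: size_undup_blocks disJ constJ => [|j]; last by rewrite -card_gt0 cardJ.
by have := size_char_poly B; rewrite charB size_prod_XsubC => -[].
Qed.

Lemma trmx_horner_mx (R : comNzRingType) n (A : 'M[R]_n.+1) (p : {poly R}) :
  (horner_mx A p)^T = horner_mx A^T p.
Proof.
elim/poly_ind: p => [|p c IH]; first by rewrite !rmorph0 trmx0.
rewrite !(rmorphD, rmorphM) /= !horner_mx_X !horner_mx_C linearD /= tr_scalar_mx.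
rewrite -[_ * A]/(_ *m A) trmx_mul IH; congr (_ + _).
by have := comm_horner_mx2 A^T p 'X; rewrite horner_mx_X => ->.
Qed.

Lemma trmxX (R : comNzRingType) n (A : 'M[R]_n.+1) k : (A ^+ k)^T = A^T ^+ k.
Proof. by have := trmx_horner_mx A 'X^k; rewrite !rmorphXn /= !horner_mx_X. Qed.

Lemma sym_mx_mul_self_eq0 (R : realDomainType) n (M : 'M[R]_n) :
  M^T = M -> M *m M = 0 -> M = 0.
Proof.
move=> symM /matrixP MM0; apply/matrixP => i j; rewrite mxE.
have /eqP := MM0 i i; rewrite !mxE (eq_bigr (fun k => M i k ^+ 2)); last first.
  by move=> k _; rewrite -{2}symM mxE expr2.
rewrite psumr_eq0 => [/allP/(_ j (mem_index_enum _))|k _]; last exact: sqr_ge0.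
by rewrite sqrf_eq0 => /eqP.
Qed.

Lemma sym_mx_nilpotent_eq0 (R : realDomainType) n (M : 'M[R]_n.+1) k :
  M^T = M -> M ^+ k = 0 -> M = 0.
Proof.
move=> symM Mk0; suff: M ^+ (2 ^ k) = 0.
  elim: k {Mk0} => [|j IH]; first by rewrite expr1.
  move=> M2j0; apply: IH; apply: sym_mx_mul_self_eq0; first by rewrite trmxX symM.
  by rewrite -[_ *m _]exprD addnn -mul2n -expnS.
by rewrite -(subnK (ltnW (ltn_expl k (ltnSn 1)))) exprD Mk0 mulr0.
Qed.

Lemma sym_mx_prod_eigs_eq0 (R : realFieldType) n (B : 'M[R]_n.+1) (s t : seq R) :
  B^T = B -> char_poly B = \prod_(z <- s) ('X - z%:P) -> {subset s <= t} ->
  \prod_(y <- t) (B - y%:M) = 0.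
Proof.
move=> symB charB sub_st; pose q := \prod_(y <- t) ('X - y%:P).
have -> : \prod_(y <- t) (B - y%:M) = horner_mx B q.
  by rewrite rmorph_prod; apply: eq_bigr => y _; rewrite rmorphB /= horner_mx_X horner_mx_C.
(* q(B) is symmetric, and nilpotent because char_poly B divides q ^+ size s. *)
apply: (@sym_mx_nilpotent_eq0 _ _ _ (size s)); first by rewrite trmx_horner_mx symB.
have q_factor : q ^+ size s = \prod_(z <- s) (q %/ ('X - z%:P)) * char_poly B.
  rewrite charB -big_split -(count_predT s) -iter_mulr_1 -big_const_seq /=.
  apply: eq_big_seq => z zs; rewrite divpK // -root_factor_theorem.
  by rewrite root_prod_XsubC sub_st.
by rewrite -rmorphXn q_factor rmorphM /= Cayley_Hamilton mulr0.
Qed.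

Lemma horner_char_poly (R : comNzRingType) n (A : 'M[R]_n) x :
  (char_poly A).[x] = \det (x%:M - A).
Proof.
rewrite /char_poly -[_.[x]]/(horner_eval x _) -det_map_mx; congr (\det _).
by apply/matrixP => i j; rewrite !mxE /= horner_evalE hornerD hornerN hornerMn hornerX hornerC.
Qed.

Lemma mulmx_prod_eigen (R : comNzRingType) n (A : 'M[R]_n.+1) (v : 'rV[R]_n.+1) x
    (t : seq R) (P : pred R) :
  v *m A = x *: v ->
  v *m \prod_(y <- t | P y) (A - y%:M) = (\prod_(y <- t | P y) (x - y)) *: v.
Proof.
move=> Av; elim: t => [|y t IH]; first by rewrite !big_nil scale1r mulmx1.
rewrite !big_cons; case: (P y) => //.
rewrite -[_ * _]/(_ *m _) mulmxA mulmxBr Av mul_mx_scalar -scalerBl -scalemxAl IH.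
by rewrite scalerA.
Qed.

Lemma prod_others_eigen (R : comNzRingType) n (B : 'M[R]_n.+1) (f : R -> R) (a : seq R) x :
  uniq a -> x \in a -> \prod_(y <- a) (B - (f y)%:M) = 0 ->
  (\prod_(y <- a | y != x) (B - (f y)%:M)) *m B = f x *: \prod_(y <- a | y != x) (B - (f y)%:M).
Proof.
move=> uniq_a xa prod0.
have hornerE (P : pred R) :
    \prod_(y <- a | P y) (B - (f y)%:M) = horner_mx B (\prod_(y <- a | P y) ('X - (f y)%:P)).
  by rewrite rmorph_prod; apply: eq_bigr => y _; rewrite rmorphB /= horner_mx_X horner_mx_C.
have XsubE : B - (f x)%:M = horner_mx B ('X - (f x)%:P).
  by rewrite rmorphB /= horner_mx_X horner_mx_C.
apply/eqP; rewrite -subr_eq0 -mul_mx_scalar -mulmxBr XsubE hornerE -[_ *m _]rmorphM mulrC.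
rewrite -(bigD1_seq x) // -[X in X == _]hornerE; exact/eqP.
Qed.

Lemma eigenrows_decomposition (R : comNzRingType) n (Q B : 'M[R]_n) (mu : 'rV[R]_n) :
  Q *m Q^T = 1%:M -> (forall i, row i Q *m B = mu 0 i *: row i Q) ->
  B = Q^T *m diag_mx mu *m Q.
Proof.
move=> QQt QB.
have QBE : Q *m B = diag_mx mu *m Q.
  by apply/row_matrixP => i; rewrite !row_mul QB row_diag_mx -scalemxAl -rowE.
by rewrite -mulmxA -QBE mulmxA (mulmx1C QQt) mul1mx.
Qed.

Lemma orthogonal_diag_eigenrows (R : comNzRingType) n (P D : 'M[R]_n) i :
  P *m P^T = 1%:M -> is_diag_mx D -> row i P^T *m (P *m D *m P^T) = D i i *: row i P^T.
Proof.
move=> PPt /diag_mxP [d ->]; rewrite !mulmxA -!row_mul (mulmx1C PPt) mul1mx.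
by rewrite row_mul row_diag_mx -scalemxAl -rowE mxE eqxx mulr1n.
Qed.

Section GramSchmidt.
Variables (R : rcfType) (n : nat).
Implicit Types (u v : 'rV[R]_n) (w : nat -> 'rV[R]_n).

Definition vdot u v : R := (u *m v^T) 0 0.

Lemma vdotC u v : vdot u v = vdot v u.
Proof. by rewrite /vdot -{1}[u]trmxK -trmx_mul mxE. Qed.

Lemma vdotBl u v v' : vdot (u - v) v' = vdot u v' - vdot v v'.
Proof. by rewrite /vdot mulmxBl !mxE. Qed.

Lemma vdotZl a u v : vdot (a *: u) v = a * vdot u v.
Proof. by rewrite /vdot -scalemxAl mxE. Qed.

Lemma vdotZr a u v : vdot u (a *: v) = a * vdot u v.
Proof. by rewrite vdotC vdotZl vdotC. Qed.

Lemma vdot_suml (I : Type) (r : seq I) (P : pred I) (f : I -> 'rV[R]_n) v :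
  vdot (\sum_(i <- r | P i) f i) v = \sum_(i <- r | P i) vdot (f i) v.
Proof. by rewrite /vdot mulmx_suml summxE. Qed.

Lemma sym_eigenvectors_orthogonal (B : 'M[R]_n) u v a b :
  B^T = B -> u *m B = a *: u -> v *m B = b *: v -> a != b -> vdot u v = 0.
Proof.
move=> symB Bu Bv neq_ab.
have : a * vdot u v = b * vdot u v.
  by rewrite -vdotZl -vdotZr /vdot -Bu -Bv trmx_mul symB mulmxA.
by move/eqP; rewrite -subr_eq0 -mulrBl mulf_eq0 subr_eq0 (negbTE neq_ab) => /eqP.
Qed.

Definition normalize u := (Num.sqrt (vdot u u))^-1 *: u.

Lemma vdot_normalize u : 0 < vdot u u -> vdot (normalize u) (normalize u) = 1.
Proof.
move=> u_gt0; rewrite vdotZl vdotZr mulrA -expr2 exprVn sqr_sqrtr ?ltW //.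
by rewrite mulVf // gt_eqF.
Qed.

Fixpoint gs_seq w k : seq 'rV[R]_n :=
  if k is k'.+1 then
    let q := gs_seq w k' in
    rcons q (normalize (w k' - \sum_(j < k') vdot (w k') q`_j *: q`_j))
  else [::].

Definition gs_vec w k := (gs_seq w k.+1)`_k.

Definition gs_res w k := w k - \sum_(j < k) vdot (w k) (gs_vec w j) *: gs_vec w j.

Lemma size_gs_seq w k : size (gs_seq w k) = k.
Proof. by elim: k => //= k IH; rewrite size_rcons IH. Qed.

Lemma nth_gs_seq w k j : (j < k)%N -> (gs_seq w k)`_j = gs_vec w j.
Proof.
elim: k => // k IH; rewrite ltnS leq_eqVlt => /predU1P[-> //|jk].
by rewrite /= nth_rcons size_gs_seq jk IH.
Qed.

Lemma gs_vecE w k : gs_vec w k = normalize (gs_res w k).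
Proof.
rewrite /gs_vec /= nth_rcons size_gs_seq ltnn eqxx /gs_res.
by congr (normalize (_ - _)); apply: eq_bigr => j _; rewrite nth_gs_seq.
Qed.

Lemma vdot_gs_res w k j :
  (forall i i', (i < k)%N -> (i' < k)%N -> vdot (gs_vec w i) (gs_vec w i') = (i == i')%:R) ->
  (j < k)%N -> vdot (gs_res w k) (gs_vec w j) = 0.
Proof.
move=> orth jk; rewrite vdotBl vdot_suml (bigD1 (Ordinal jk)) //= vdotZl orth // eqxx.
rewrite mulr1 big1 ?addr0 ?subrr // => i neq_ij.
by rewrite vdotZl orth ?ltn_ord // (_ : (i == j :> nat) = false) ?mulr0 //; exact: negbTE.
Qed.

Lemma vdot_row m (M : 'M[R]_(m, n)) i j : vdot (row i M) (row j M) = (M *m M^T) i j.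
Proof. by rewrite /vdot !mxE; apply: eq_bigr => k _; rewrite !mxE. Qed.

Lemma gs_orthonormal w K :
  (forall k, (k < K)%N -> 0 < vdot (gs_res w k) (gs_res w k)) ->
  forall i j, (i < K)%N -> (j < K)%N -> vdot (gs_vec w i) (gs_vec w j) = (i == j)%:R.
Proof.
elim: K => // K IH res_gt0.
have {IH}orth := IH (fun k kK => res_gt0 k (ltnW kK)).
have new j : (j < K)%N -> vdot (gs_vec w K) (gs_vec w j) = 0.
  by move=> jK; rewrite [gs_vec w K]gs_vecE vdotZl vdot_gs_res ?mulr0.
move=> i j; rewrite !ltnS (leq_eqVlt i) (leq_eqVlt j) => /predU1P[->|iK] /predU1P[->|jK].
- by rewrite eqxx gs_vecE vdot_normalize ?res_gt0.
- by rewrite new // gtn_eqF.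
- by rewrite vdotC new // ltn_eqF.
- exact: orth.
Qed.

Lemma gs_eigen (B : 'M[R]_n) (mu : nat -> R) w :
  B^T = B -> (forall k, w k *m B = mu k *: w k) ->
  forall k, gs_vec w k *m B = mu k *: gs_vec w k.
Proof.
move=> symB Bw; elim/ltn_ind => k IH.
rewrite gs_vecE -scalemxAl scalerA mulrC -scalerA; congr (_ *: _).
rewrite mulmxBl Bw mulmx_suml scalerBr scaler_sumr; congr (_ - _).
apply: eq_bigr => j _; rewrite -scalemxAl IH //.
have [->|neq] := eqVneq (mu j) (mu k); first by rewrite !scalerA mulrC.
rewrite (sym_eigenvectors_orthogonal symB (Bw k) (IH j (ltn_ord j))) 1?eq_sym //.
by rewrite !scale0r scaler0.
Qed.

Definition gs_mx w : 'M[R]_n := \matrix_(i < n) gs_vec w i.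

Lemma gs_mx_orthogonal w :
  (forall k, (k < n)%N -> 0 < vdot (gs_res w k) (gs_res w k)) -> gs_mx w *m (gs_mx w)^T = 1%:M.
Proof.
move=> res_gt0; apply/matrixP => i j; rewrite -vdot_row !rowK (gs_orthonormal res_gt0) //.
by rewrite mxE.
Qed.

Lemma gs_mx_decomposition (B : 'M[R]_n) (mu : nat -> R) w :
  B^T = B -> (forall k, w k *m B = mu k *: w k) ->
  (forall k, (k < n)%N -> 0 < vdot (gs_res w k) (gs_res w k)) ->
  B = (gs_mx w)^T *m diag_mx (\row_(i < n) mu i) *m gs_mx w.
Proof.
move=> symB Bw res_gt0; apply: eigenrows_decomposition (gs_mx_orthogonal res_gt0) _ => i.
by rewrite rowK mxE (gs_eigen symB Bw).
Qed.

End GramSchmidt.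

Import boolp classical_sets topology normedtype realfun matrix_normedtype.
Import numFieldTopology.Exports numFieldNormedType.Exports.
Local Open Scope classical_set_scope.

Section MatrixConvergence.
Variables (R : realType) (T : Type) (F : set_system T).
Context {FF : Filter F}.

Definition mxcvg m n (f : T -> 'M[R]_(m, n)) (C : 'M[R]_(m, n)) :=
  forall i j, f x i j @[x --> F] --> C i j.

Lemma cvg_sumr (I : eqType) (r : seq I) (P : pred I) (f : I -> T -> R) (c : I -> R) :
  (forall i, i \in r -> P i -> f i x @[x --> F] --> c i) ->
  \sum_(i <- r | P i) f i x @[x --> F] --> \sum_(i <- r | P i) c i.
Proof.
move=> fc; rewrite big_seq_cond; under eq_fun do rewrite big_seq_cond.
by apply: (@cvg_big R I +%R 0 _ add_continuous) => // i /andP [/fc].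
Qed.

Lemma cvg_prodr (I : eqType) (r : seq I) (P : pred I) (f : I -> T -> R) (c : I -> R) :
  (forall i, i \in r -> P i -> f i x @[x --> F] --> c i) ->
  \prod_(i <- r | P i) f i x @[x --> F] --> \prod_(i <- r | P i) c i.
Proof.
move=> fc; rewrite big_seq_cond; under eq_fun do rewrite big_seq_cond.
by apply: (@cvg_big R I *%R 1 _ mul_continuous) => // i /andP [/fc].
Qed.

Lemma mxcvg_cst m n (C : 'M[R]_(m, n)) : mxcvg (fun=> C) C.
Proof. by move=> i j; exact: cvg_cst. Qed.

Lemma mxcvgD m n (f g : T -> 'M[R]_(m, n)) A B :
  mxcvg f A -> mxcvg g B -> mxcvg (fun x => f x + g x) (A + B).
Proof. by move=> fA gB i j; rewrite mxE; under eq_fun do rewrite mxE; exact: cvgD. Qed.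

Lemma mxcvgN m n (f : T -> 'M[R]_(m, n)) A : mxcvg f A -> mxcvg (fun x => - f x) (- A).
Proof. by move=> fA i j; rewrite mxE; under eq_fun do rewrite mxE; exact: cvgN. Qed.

Lemma mxcvgB m n (f g : T -> 'M[R]_(m, n)) A B :
  mxcvg f A -> mxcvg g B -> mxcvg (fun x => f x - g x) (A - B).
Proof. by move=> fA gB; apply: mxcvgD => //; exact: mxcvgN. Qed.

Lemma mxcvgZ m n (k : T -> R) (f : T -> 'M[R]_(m, n)) (c : R) A :
  k x @[x --> F] --> c -> mxcvg f A -> mxcvg (fun x => k x *: f x) (c *: A).
Proof. by move=> kc fA i j; rewrite mxE; under eq_fun do rewrite mxE; exact: cvgM. Qed.

Lemma mxcvg_scalar n (k : T -> R) (c : R) :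
  k x @[x --> F] --> c -> mxcvg (fun x => (k x)%:M : 'M_n) c%:M.
Proof.
move=> kc i j; rewrite mxE; under eq_fun do rewrite mxE.
by case: (i == j); [exact: kc | exact: cvg_cst].
Qed.

Lemma mxcvg_tr m n (f : T -> 'M[R]_(m, n)) A : mxcvg f A -> mxcvg (fun x => (f x)^T) A^T.
Proof. by move=> fA i j; rewrite mxE; under eq_fun do rewrite mxE; exact: fA. Qed.

Lemma mxcvg_mul m n p (f : T -> 'M[R]_(m, n)) (g : T -> 'M[R]_(n, p)) A B :
  mxcvg f A -> mxcvg g B -> mxcvg (fun x => f x *m g x) (A *m B).
Proof.
move=> fA gB i j; rewrite mxE; under eq_fun do rewrite mxE.
by apply: cvg_sumr => k _ _; exact: cvgM.
Qed.

Lemma mxcvg_sum m n (I : eqType) (r : seq I) (P : pred I) (f : I -> T -> 'M[R]_(m, n))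
    (C : I -> 'M[R]_(m, n)) :
  (forall i, i \in r -> P i -> mxcvg (f i) (C i)) ->
  mxcvg (fun x => \sum_(i <- r | P i) f i x) (\sum_(i <- r | P i) C i).
Proof.
move=> fC i j; rewrite summxE; under eq_fun do rewrite summxE.
by apply: cvg_sumr => k rk Pk; exact: fC.
Qed.

Lemma mxcvg_prod n (I : eqType) (r : seq I) (P : pred I) (f : I -> T -> 'M[R]_n.+1)
    (C : I -> 'M[R]_n.+1) :
  (forall i, i \in r -> P i -> mxcvg (f i) (C i)) ->
  mxcvg (fun x => \prod_(i <- r | P i) f i x) (\prod_(i <- r | P i) C i).
Proof.
elim: r => [|i r IH] fC.
  by rewrite big_nil; under eq_fun do rewrite big_nil; exact: mxcvg_cst.
rewrite big_cons; under eq_fun do rewrite big_cons.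
have /IH {}IH : forall j, j \in r -> P j -> mxcvg (f j) (C j).
  by move=> j jr; apply: fC; rewrite inE jr orbT.
by case: ifP => // Pi; apply: mxcvg_mul IH; apply: fC; rewrite ?mem_head.
Qed.

Lemma cvg_det n (f : T -> 'M[R]_n) A : mxcvg f A -> \det (f x) @[x --> F] --> \det A.
Proof.
move=> fA; rewrite /determinant; under eq_fun do rewrite /determinant.
apply: cvg_sumr => s _ _; apply: cvgM; first exact: cvg_cst.
by apply: cvg_prodr => i _ _; exact: fA.
Qed.

Lemma cvg_vdot n (f g : T -> 'rV[R]_n) u v :
  mxcvg f u -> mxcvg g v -> vdot (f x) (g x) @[x --> F] --> vdot u v.
Proof.
move=> fu gv; rewrite /vdot; under eq_fun do rewrite /vdot.
exact: mxcvg_mul fu (mxcvg_tr gv) 0 0.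
Qed.

Lemma gs_cvg n (w : T -> nat -> 'rV[R]_n) (p : nat -> 'rV[R]_n) K :
  (forall i j, (i < K)%N -> (j < K)%N -> vdot (p i) (p j) = (i == j)%:R) ->
  (forall k, (k < K)%N -> mxcvg (fun x => w x k) (p k)) ->
  forall k, (k < K)%N ->
    mxcvg (fun x => gs_vec (w x) k) (p k) /\
    vdot (gs_res (w x) k) (gs_res (w x) k) @[x --> F] --> (1 : R).
Proof.
move=> orth wp; elim/ltn_ind => k IH kK.
have {}IH (j : 'I_k) : mxcvg (fun x => gs_vec (w x) j) (p j).
  by case: (IH j (ltn_ord j) (ltn_trans (ltn_ord j) kK)).
have res_cvg : mxcvg (fun x => gs_res (w x) k) (p k).
  have proj0 : \sum_(j < k) vdot (p k) (p j) *: p j = 0.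
    apply: big1 => j _; rewrite orth ?(ltn_trans (ltn_ord j)) //.
    by rewrite gtn_eqF // scale0r.
  rewrite -[p k]subr0 -proj0; apply: mxcvgB; first exact: wp.
  by apply: mxcvg_sum => j _ _; apply: mxcvgZ (IH j); apply: cvg_vdot (wp _ kK) (IH j).
have norm_cvg : vdot (gs_res (w x) k) (gs_res (w x) k) @[x --> F] --> (1 : R).
  have <- : vdot (p k) (p k) = 1 by rewrite orth ?eqxx.
  exact: cvg_vdot.
split => //; under eq_fun do rewrite gs_vecE.
rewrite -[p k]scale1r; apply: mxcvgZ res_cvg.
have sqrt_cvg : Num.sqrt (vdot (gs_res (w x) k) (gs_res (w x) k)) @[x --> F] --> (1 : R).
  by rewrite -sqrtr1; apply: continuous_cvg norm_cvg; exact: sqrt_continuous.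
by rewrite -invr1; apply: cvgV sqrt_cvg; exact: oner_neq0.
Qed.

End MatrixConvergence.

Lemma pos_seq_lbound (R : realDomainType) (t : seq R) :
  (forall z, z \in t -> 0 < z) -> exists2 m : R, 0 < m & forall z, z \in t -> m <= z.
Proof.
elim: t => [|z t IH] t_gt0; first by exists 1.
have [|m m_gt0 mt] := IH; first by move=> y yt; apply: t_gt0; rewrite inE yt orbT.
exists (Num.min z m); first by rewrite lt_min t_gt0 ?mem_head.
by move=> y; rewrite inE ge_min => /predU1P[->|/mt->]; rewrite ?lexx ?orbT.
Qed.

Lemma uniq_gap (R : realFieldType) (a : seq R) :
  exists2 g : R, 0 < g & forall x y, x \in a -> y \in a -> x != y -> g *+ 2 <= `|x - y|.
Proof.
pose dists := [seq `|xy.1 - xy.2| | xy <- [seq (x, y) | x <- a, y <- a] & xy.1 != xy.2].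
have [|m m_gt0 mt] := @pos_seq_lbound R dists.
  by move=> _ /mapP [[x y] + ->]; rewrite mem_filter /= normr_gt0 subr_eq0 => /andP []...
exists (m / 2) => [|x y xa ya neq_xy]; first by rewrite divr_gt0.
rewrite mulr2n -splitr; apply: mt; apply/mapP; exists (x, y) => //.
by rewrite mem_filter /= neq_xy; apply/allpairsP; exists (x, y).
Qed.

Definition eig_near (R : numFieldType) n (B : 'M[R]_n) (g x : R) : R :=
  if pselect (exists z, eigenvalue B z /\ `|z - x| < g) is left e then projT1 (cid e) else x.

Lemma eig_nearP (R : numFieldType) n (B : 'M[R]_n) g x :
  (exists z, eigenvalue B z /\ `|z - x| < g) ->
  eigenvalue B (eig_near B g x) /\ `|eig_near B g x - x| < g.
Proof. by rewrite /eig_near; case: pselect => // e _; exact: projT2 (cid e). Qed.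

Lemma eig_near_matching (R : realFieldType) n (B : 'M[R]_n) (a : seq R) g :
  uniq a -> (forall x y, x \in a -> y \in a -> x != y -> g *+ 2 <= `|x - y|) ->
  (exists s, char_poly B = \prod_(z <- s) ('X - z%:P) /\ (size (undup s) <= size a)%N) ->
  (forall x, x \in a -> exists z, eigenvalue B z /\ `|z - x| < g) ->
  [/\ forall z, eigenvalue B z <-> z \in map (eig_near B g) a,
      forall x z, x \in a -> eigenvalue B z -> `|z - x| < g -> z = eig_near B g x &
      uniq (map (eig_near B g) a)].
Proof.
move=> uniq_a gap [s [charB size_s]] near_a.
have center x y z : x \in a -> y \in a -> `|z - x| < g -> `|z - y| < g -> x = y.
  move=> xa ya zx zy; apply/eqP/negP => /negP neq_xy.
  have := gap x y xa ya neq_xy; apply/negP; rewrite -ltNge mulr2n.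
  by rewrite (le_lt_trans (ler_distD z x y)) // distrC ltrD.
have uniq_near : uniq (map (eig_near B g) a).
  rewrite map_inj_in_uniq // => x y xa ya eq_xy.
  apply: (center x y (eig_near B g x) xa ya); first exact: (eig_nearP (near_a x xa)).2.
  by rewrite eq_xy; exact: (eig_nearP (near_a y ya)).2.
have eigB z : eigenvalue B z = (z \in undup s).
  by rewrite eigenvalue_root_char charB root_prod_XsubC mem_undup.
have [_ near_undup] : (size (map (eig_near B g) a) = size (undup s)) *
                      (map (eig_near B g) a =i undup s).
  apply: uniq_min_size uniq_near _ _; last by rewrite size_map.
  by move=> _ /mapP [x xa ->]; rewrite -eigB; exact: (eig_nearP (near_a x xa)).1.
split=> // [z|x z xa]; first by rewrite eigB near_undup.
rewrite eigB -near_undup => /mapP [y ya ->] yx.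
by rewrite (center x y (eig_near B g y) xa ya yx (eig_nearP (near_a y ya)).2).
Qed.

Lemma near_forall_seq (T : Type) (F : set_system T) (I : eqType) (r : seq I)
    (P : I -> T -> Prop) :
  Filter F -> (forall i, i \in r -> \forall x \near F, P i x) ->
  \forall x \near F, forall i, i \in r -> P i x.
Proof.
move=> FF; elim: r => [|i r IH] near_P; first exact: filterE.
apply: filterS2 (near_P i (mem_head i r)) (IH _) => [x Pix Prx j|j jr].
  by rewrite inE => /predU1P[->|/Prx].
by apply: near_P; rewrite inE jr orbT.
Qed.

Section Perturbation.
Variables (R : realType) (n : nat) (F : set_system 'M[R]_n.+1).
Context {FF : Filter F}.
Variables (A : 'M[R]_n.+1) (a : seq R) (g : R).
Hypothesis FA : mxcvg F id A.
Hypothesis uniq_a : uniq a.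
Hypothesis eig_A : forall z, eigenvalue A z <-> z \in a.
Hypothesis g_gt0 : 0 < g.
Hypothesis gap_a : forall x y, x \in a -> y \in a -> x != y -> g *+ 2 <= `|x - y|.
Hypothesis near_sym_split : \forall B \near F, B^T = B /\
  exists s, char_poly B = \prod_(z <- s) ('X - z%:P) /\ (size (undup s) <= size a)%N.

Lemma near_eigenvalue x eta : eigenvalue A x -> 0 < eta ->
  \forall B \near F, exists z, eigenvalue B z /\ `|z - x| < eta.
Proof.
move=> eigAx eta_gt0.
have det_cvg : \det (x%:M - B) @[B --> F] --> (0 : R).
  move: eigAx; rewrite eigenvalue_root_char /root horner_char_poly => /eqP <-.
  by apply: cvg_det; apply: mxcvgB FA; apply: mxcvg_scalar; exact: cvg_cst.
move/cvgrPdist_lt: det_cvg => /(_ (eta ^+ n.+1) (exprn_gt0 _ eta_gt0)) near_det.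
apply: filterS2 near_det near_sym_split => B det_small [_ [s [charB _]]].
have [/hasP [z zs zx]|/hasPn far] := boolP (has (fun z => `|z - x| < eta) s).
  by exists z; rewrite eigenvalue_root_char charB root_prod_XsubC.
have size_s : size s = n.+1.
  by have := size_char_poly B; rewrite charB size_prod_XsubC => -[].
suff : eta ^+ n.+1 <= `|\det (x%:M - B)|.
  by rewrite sub0r normrN in det_small => /le_lt_trans/(_ det_small); rewrite ltxx.
have -> : eta ^+ n.+1 = \prod_(z <- s) eta.
  by rewrite big_const_seq count_predT size_s iter_mulr_1.
rewrite -horner_char_poly charB horner_prod normr_prod !big_seq.
apply: ler_prod => z zs; rewrite ltW //= hornerXsubC distrC leNgt.
exact: far.
Qed.

Lemma near_matched : \forall B \near F, B^T = B /\
  [/\ forall z, eigenvalue B z <-> z \in map (eig_near B g) a,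
      forall x z, x \in a -> eigenvalue B z -> `|z - x| < g -> z = eig_near B g x,
      uniq (map (eig_near B g) a) &
      \prod_(y <- a) (B - (eig_near B g y)%:M) = 0].
Proof.
have near_a : \forall B \near F, forall x, x \in a -> exists z, eigenvalue B z /\ `|z - x| < g.
  by apply: near_forall_seq => x xa; apply: near_eigenvalue g_gt0; rewrite eig_A.
apply: filterS2 near_sym_split near_a => B [symB splitB] nearB.
have [eigB centerB uniqB] := eig_near_matching uniq_a gap_a splitB nearB.
have [s [charB _]] := splitB; split=> //; split=> //.
rewrite -(big_map (eig_near B g) xpredT (fun y => B - y%:M)).
apply: (sym_mx_prod_eigs_eq0 symB charB) => z zs.
by rewrite -eigB eigenvalue_root_char charB root_prod_XsubC.
Qed.

Lemma eig_near_cvg x : x \in a -> eig_near B g x @[B --> F] --> x.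
Proof.
move=> xa; apply/cvgrPdist_lt => e e_gt0.
have eg_gt0 : 0 < Num.min e g by rewrite lt_min e_gt0 g_gt0.
have := near_eigenvalue (proj2 (eig_A x) xa) eg_gt0.
apply: filterS2 near_matched => B [_ [_ centerB _ _]] [z [eigBz]].
by rewrite lt_min => /andP [ze zg]; rewrite distrC -(centerB x z).
Qed.

(* Lagrange interpolation at the eigenvalues of B, equal to 1 at the one near x. *)
Definition eigproj (B : 'M[R]_n.+1) x :=
  (\prod_(y <- a | y != x) (eig_near B g x - eig_near B g y))^-1 *:
    \prod_(y <- a | y != x) (B - (eig_near B g y)%:M).

Lemma eigproj_cvg (v : 'rV[R]_n.+1) x :
  x \in a -> v *m A = x *: v -> mxcvg F (fun B => v *m eigproj B x) v.
Proof.
move=> xa Av; have prod_neq0 : \prod_(y <- a | y != x) (x - y) != 0.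
  by rewrite prodf_seq_neq0; apply/allP => y _; apply/implyP; rewrite subr_eq0 eq_sym.
have vE : v *m ((\prod_(y <- a | y != x) (x - y))^-1 *: \prod_(y <- a | y != x) (A - y%:M)) = v.
  by rewrite -scalemxAr (mulmx_prod_eigen _ _ Av) scalerA mulVf ?scale1r.
rewrite -[X in mxcvg _ _ X]vE; apply: mxcvg_mul; first exact: mxcvg_cst.
apply: mxcvgZ.
  by apply: cvgV prod_neq0 _; apply: cvg_prodr => y ya _; apply: cvgB; exact: eig_near_cvg.
apply: mxcvg_prod => y ya _; apply: mxcvgB; first exact: FA.
by apply: mxcvg_scalar; exact: eig_near_cvg.
Qed.

Lemma near_eigproj_eigen : \forall B \near F,
  forall x, x \in a -> eigproj B x *m B = eig_near B g x *: eigproj B x.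
Proof.
apply: filterS near_matched => B [_ [_ _ _ prod0]] x xa.
by rewrite -scalemxAl (prod_others_eigen uniq_a xa prod0) scalerA mulrC -scalerA.
Qed.

Definition perturbed_eigenbasis (p : nat -> 'rV[R]_n.+1) (mu : nat -> R) B :=
  gs_mx (fun k => p k *m eigproj B (mu k)).

Lemma near_perturbed_eigenbasis p mu eps :
  (forall i j, (i < n.+1)%N -> (j < n.+1)%N -> vdot (p i) (p j) = (i == j)%:R) ->
  (forall k, p k *m A = mu k *: p k) -> (forall k, mu k \in a) -> 0 < eps ->
  \forall B \near F, let Q := perturbed_eigenbasis p mu B in
    [/\ Q *m Q^T = 1%:M, B = Q^T *m diag_mx (\row_i eig_near B g (mu i)) *m Q &
        forall i j, `|Q i j - p i 0 j| < eps].
Proof.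
move=> orth_p eig_p mu_a eps_gt0; pose w B k := p k *m eigproj B (mu k).
have w_cvg k : (k < n.+1)%N -> mxcvg F (fun B => w B k) (p k).
  by move=> _; exact: eigproj_cvg (mu_a k) (eig_p k).
have gs_lim := @gs_cvg _ _ F FF _ _ _ _ orth_p w_cvg.
have near_res : \forall B \near F,
    forall k : 'I_n.+1, 0 < vdot (gs_res (w B) k) (gs_res (w B) k).
  apply: filter_forall => k; have [_ /cvgrPdist_lt/(_ 1 ltr01)] := gs_lim k (ltn_ord k).
  by apply: filterS => B /ltr_distlBl; rewrite subrr.
have near_p : \forall B \near F, forall i j : 'I_n.+1, `|gs_vec (w B) i 0 j - p i 0 j| < eps.
  apply: filter_forall => i; apply: filter_forall => j.
  have [/(_ 0 j)/cvgrPdist_lt/(_ eps eps_gt0) near_ij _] := gs_lim i (ltn_ord i).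
  by apply: filterS near_ij => B; rewrite distrC.
near=> B.
have [//|symB _] := near near_matched B.
have wB k : w B k *m B = eig_near B g (mu k) *: w B k.
  by rewrite -mulmxA (near near_eigproj_eigen B) ?mu_a // -scalemxAr.
have res_gt0 k : (k < n.+1)%N -> 0 < vdot (gs_res (w B) k) (gs_res (w B) k).
  by move=> klt; apply: (near near_res B _ (Ordinal klt)).
split; [exact: gs_mx_orthogonal res_gt0 | exact: gs_mx_decomposition symB wB res_gt0 |].
by move=> i j; rewrite mxE; apply: (near near_p B _ i j).
Unshelve. all: by end_near.
Qed.

Lemma near_spectral_decomposition (P D : 'M[R]_n.+1) eps :
  P *m P^T = 1%:M -> is_diag_mx D -> A = P *m D *m P^T -> 0 < eps ->
  \forall B \near F, n_distinct_eigs B (size a) /\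
    exists Q F' : 'M[R]_n.+1,
      [/\ orthogonal_mx Q, is_diag_mx F', B = Q *m F' *m Q^T,
          (forall i, `|D i i - F' i i| < eps) & (forall i j, `|Q i j - P i j| < eps)].
Proof.
move=> PPt diagD defA eps_gt0.
pose p k := row (inord k : 'I_n.+1) P^T; pose mu k := D (inord k) (inord k).
have eig_p k : p k *m A = mu k *: p k by rewrite defA orthogonal_diag_eigenrows.
have orth_p i j : (i < n.+1)%N -> (j < n.+1)%N -> vdot (p i) (p j) = (i == j)%:R.
  move=> ilt jlt; rewrite vdot_row trmxK (mulmx1C PPt) mxE.
  by rewrite -(inj_eq val_inj) /= !inordK.
have mu_a k : mu k \in a.
  apply/eig_A/eigenvalueP; exists (p k) => //; apply/eqP => p0.
  have := orth_p (inord k : 'I_n.+1) (inord k : 'I_n.+1) (ltn_ord _) (ltn_ord _).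
  rewrite /p inord_val -/(p k) p0 eqxx /vdot mul0mx mxE => /eqP.
  by rewrite eq_sym oner_eq0.
have near_D : \forall B \near F, forall i : 'I_n.+1, `|D i i - eig_near B g (mu i)| < eps.
  apply: filter_forall => i; have := eig_near_cvg (mu_a i).
  by rewrite /mu inord_val => /cvgrPdist_lt/(_ eps eps_gt0).
near=> B.
have [//|_ [eigB _ uniqB _]] := near near_matched B.
have [//|QQt defB near_p] := near (near_perturbed_eigenbasis orth_p eig_p mu_a eps_gt0) B.
split; first by exists (map (eig_near B g) a); rewrite size_map.
exists (perturbed_eigenbasis p mu B)^T, (diag_mx (\row_i eig_near B g (mu i))); split.
- by rewrite /orthogonal_mx trmxK; exact: mulmx1C QQt.
- exact: diag_mx_is_diag.
- by rewrite trmxK.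
- by move=> i; rewrite !mxE eqxx mulr1n; apply: (near near_D B _ i).
- by move=> i j; have := near_p j i; rewrite /p inord_val !mxE.
Unshelve. all: by end_near.
Qed.

End Perturbation.

Theorem lemma3p3 (R : realType) (d r : nat) (lv : 'I_r -> nat)
  (A P D : 'M[R]_d) :
  (2 <= d)%N -> (1 <= r)%N ->
  (forall j, 1 <= lv j <= d)%N ->
  (\sum_(j < r) lv j <= d)%N ->
  in_S lv A ->
  orthogonal_mx P -> is_diag_mx D -> A = P *m D *m P^T ->
  n_distinct_eigs A (d - \sum_(j < r) (lv j).-1)%N ->
  forall eps : R, 0 < eps ->
  exists delta : R, 0 < delta /\
    forall B : 'M[R]_d, in_S lv B ->
      (forall i j, `|A i j - B i j| < delta) ->
      n_distinct_eigs B (d - \sum_(j < r) (lv j).-1)%N /\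
      exists Q F : 'M[R]_d,
        [/\ orthogonal_mx Q, is_diag_mx F, B = Q *m F *m Q^T,
            (forall i, `|D i i - F i i| < eps) &
            (forall i j, `|Q i j - P i j| < eps)].
Proof.
case: d A P D => [|n] A P D // _ _ lv_range _ _ PPt diagD defA [a [uniq_a [size_a eig_A]]].
move=> eps eps_gt0; have [g g_gt0 gap_a] := uniq_gap a.
pose FS := within (in_S lv) (nbhs A).
have FA : mxcvg FS id A.
  by move=> i j; apply: cvg_within_filter; exact: coord_continuous.
have near_split : \forall B \near FS, B^T = B /\ exists s,
    char_poly B = \prod_(z <- s) ('X - z%:P) /\ (size (undup s) <= size a)%N.
  apply: filterS (near_withinT (in_S lv) _) => B /in_S_sym_split.
  by rewrite size_a; apply => j; case/andP: (lv_range j).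
have /(_ (within_filter _ _)) := near_spectral_decomposition FA uniq_a eig_A g_gt0 gap_a
  near_split PPt diagD defA eps_gt0.
rewrite size_a /FS /within /= => /nbhs_ballP [delta delta_gt0 near_delta].
by exists delta; split => // B SB AB; apply: near_delta SB; split.
Qed.
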